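(* Let $K_1,\dots,K_n$ be an operator Frobenius algebra on a smooth $n$-manifold with structure functions $a_{ij}^s$, and assume the $K_i$ are pairwise symmetries of each other. Then for smooth functions $h^1,\dots,h^n$, the operator field $K=\sum_s h^sK_s$ is a common symmetry of $K_1,\dots,K_n$ if and only if $$K_i^*\,\mathrm dh^j=\sum_s a^j_{is}\,\mathrm dh^s\qquad\text{for all } i,j=1,\dots,n.$$
   Context: For operator fields ($(1,1)$-tensor fields) $L,M$ and vector fields $\xi,\eta$ set $\langle L,M\rangle(\xi,\eta)=LM[\xi,\eta]+[L\xi,M\eta]-L[\xi,M\eta]-M[L\xi,\eta]$. Commuting operator fields $L,M$ are symmetries of each other if $\langle L,M\rangle(\xi,\xi)=0$ for all $\xi$; a common symmetry of several operator fields is an operator field commuting with and being a symmetry of each of them. $L^*$ is the dual operator on 1-forms. An operator Frobenius algebra on an $n$-manifold $\mathsf M$ is given by $n$ smooth pairwise commuting operator fields $K_1,\dots,K_n$ such that at each $x\in\mathsf M$: (A1) there is $\xi\in T_x\mathsf M$ with $K_1\xi,\dots,K_n\xi$ linearly independent, and (A2) there is $a\in T_x^*\mathsf M$ with $K_1^*a,\dots,K_n^*a$ linearly independent. Its structure functions $a_{ij}^s$ are defined by $K_iK_j=\sum_s a_{ij}^sK_s$. *)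

(* Local (coordinate) model: an open set
   U of R^n (column vectors 'cV[R]_n) instead of an abstract smooth manifold. *)
From HB Require Import structures.
From mathcomp Require Import all_boot all_order all_algebra.
From mathcomp Require Import all_classical all_reals all_analysis.
Set Implicit Arguments. Unset Strict Implicit. Unset Printing Implicit Defensive.
Import Order.TTheory GRing.Theory Num.Theory.
Import numFieldNormedType.Exports.
Local Open Scope classical_set_scope.
Local Open Scope ring_scope.

Section OpFields.
Variables (R : realType) (n : nat).
Local Notation pt := 'cV[R]_n.

Definition e_ (i : 'I_n) : pt := delta_mx i 0.

Fixpoint iter_partial (s : seq 'I_n) (f : pt -> R) : pt -> R :=
  match s with
  | [::] => f
  | i :: s' => fun x => 'D_(e_ i) (iter_partial s' f) x
  end.

Definition smooth_on (U : set pt) (f : pt -> R) : Prop :=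
  forall (s : seq 'I_n) (x : pt), U x ->
    {for x, continuous (iter_partial s f)} /\
    forall i : 'I_n, derivable (iter_partial s f) x (e_ i).

Definition smooth_vf (U : set pt) (X : pt -> pt) : Prop :=
  forall k : 'I_n, smooth_on U (fun x => X x k 0).
Definition smooth_op (U : set pt) (L : pt -> 'M[R]_n) : Prop :=
  forall k l : 'I_n, smooth_on U (fun x => L x k l).

Definition lie (X Y : pt -> pt) : pt -> pt :=
  fun x => 'D_(X x) Y x - 'D_(Y x) X x.

Definition app (L : pt -> 'M[R]_n) (X : pt -> pt) : pt -> pt :=
  fun x => L x *m X x.

Definition angle (L M : pt -> 'M[R]_n) (X Y : pt -> pt) : pt -> pt :=
  fun x => L x *m M x *m lie X Y x + lie (app L X) (app M Y) x
           - L x *m lie X (app M Y) x - M x *m lie (app L X) Y x.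

Definition symmetries_on (U : set pt) (L M : pt -> 'M[R]_n) : Prop :=
  (forall x, U x -> L x *m M x = M x *m L x) /\
  (forall X : pt -> pt, smooth_vf U X ->
     forall x, U x -> angle L M X X x = 0).

Definition common_symmetry (U : set pt) (L : pt -> 'M[R]_n)
    (K : 'I_n -> pt -> 'M[R]_n) : Prop :=
  forall i : 'I_n, symmetries_on U L (K i).

Definition op_frobenius_algebra (U : set pt) (K : 'I_n -> pt -> 'M[R]_n) : Prop :=
  [/\ (forall i, smooth_op U (K i)),
      (forall i j x, U x -> K i x *m K j x = K j x *m K i x),
      (forall x, U x -> exists xi : pt,
         row_free (\matrix_(i < n, k < n) (K i x *m xi) k 0)) &
      (forall x, U x -> exists a : 'rV[R]_n,
         row_free (\matrix_(i < n, k < n) (a *m K i x) 0 k))].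

(* differential dh as a row vector (1-form): (dh)_k = d_k h *)
Definition dform (h : pt -> R) (x : pt) : 'rV[R]_n :=
  \row_(k < n) 'D_(e_ k) h x.

End OpFields.

From HB Require Import structures.
From mathcomp Require Import all_boot all_order all_algebra.
From mathcomp Require Import all_classical all_reals all_analysis.
From mathcomp Require Import ring.
Set Implicit Arguments.
Unset Strict Implicit.
Unset Printing Implicit Defensive.
Import Order.TTheory GRing.Theory Num.Theory.
Import numFieldNormedType.Exports.
Local Open Scope classical_set_scope.
Local Open Scope ring_scope.

(* For commuting L and M the derivatives of X cancel in <L,M>(X,X), which is
   therefore a quadratic expression in xi = X(x) at each point.  Expanding it
   for L = sum_s h^s K_s, the terms h^s <K_s,K_i> vanish since the K_s are
   mutual symmetries, and K_i K_s = sum_j a^j_{is} K_j collects the remaining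
   terms into <L,K_i>(xi,xi) = sum_j rho_ij(xi) K_j xi, where
   rho_ij = sum_s a^j_{is} dh^s - K_i^* dh^j.  By (A1) the K_j xi0 are linearly
   independent for some xi0, and polarizing at xi0 shows that this vanishes for
   all xi iff every rho_ij is zero.  Smoothness only serves to make all fields
   differentiable, through continuity of their partial derivatives. *)

Section MxNormEntries.
Context {K : realDomainType} {p q : nat}.

Lemma ler_mx_entry_norm (A : 'M[K]_(p, q)) i j : `|A i j| <= `|A|.
Proof.
by rewrite [leRHS]/Num.Def.normr/= mx_normrE; exact: le_bigmax _ _ (i, j).
Qed.

Lemma mx_norm_le (A : 'M[K]_(p, q)) c :
  0 <= c -> (forall i j, `|A i j| <= c) -> `|A| <= c.
Proof.
by move=> c0 Ac; rewrite /Num.Def.normr/= mx_normrE (bigmax_le _ c0)// => -[i j] _.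
Qed.

End MxNormEntries.

Lemma MVT_at0 {R : realType} (g : R -> R) (a : R) :
  (forall t, `|t| <= `|a| -> derivable g t 1) ->
  exists c, `|c| <= `|a| /\ g a - g 0 = 'D_1 g c * a.
Proof.
move=> dg; have [a0|a0] := leP 0 a.
- have : {within `[0, a], continuous g}.
    apply: derivable_within_continuous => t; rewrite in_itv /= => /andP[t0 ta].
    by apply: dg; rewrite !ger0_norm.
  case/(MVT_segment a0 (df := fun t => 'D_1 g t)).
    move=> t; rewrite in_itv /= => /andP[t0 ta]; apply: derivableP; apply: dg.
    by rewrite !ger0_norm // ltW.
  move=> c; rewrite in_itv /= => /andP[c0 ca] ->; exists c.
  by rewrite !ger0_norm // subr0.
- have a0' : a <= 0 by exact: ltW.
  have : {within `[a, 0], continuous g}.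
    apply: derivable_within_continuous => t; rewrite in_itv /= => /andP[t0 ta].
    by apply: dg; rewrite !ler0_norm // lerN2.
  case/(MVT_segment a0' (df := fun t => 'D_1 g t)).
    move=> t; rewrite in_itv /= => /andP[t0 ta]; apply: derivableP; apply: dg.
    by rewrite !ler0_norm ?lerN2 // ltW.
  move=> c; rewrite in_itv /= => /andP[c0 ca] E; exists c; split.
    by rewrite !ler0_norm // lerN2.
  by rewrite -opprB E sub0r mulrN opprK.
Qed.

Section QuadraticVanishing.
Context {F : numFieldType} {p m d : nat}.

Lemma row_free_lincomb_eq0 (v : 'I_p -> 'cV[F]_m) (c : 'I_p -> F) :
  row_free (\matrix_(j, k) v j k 0) -> \sum_j c j *: v j = 0 -> forall j, c j = 0.
Proof.
move=> free cv0 j.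
have : \row_j c j *m \matrix_(j, k) v j k 0 = 0 *m \matrix_(j, k) v j k 0.
  apply/rowP => k; rewrite mul0mx !mxE.
  transitivity ((\sum_l c l *: v l) k 0); last by rewrite cv0 mxE.
  by rewrite summxE; apply: eq_bigr => l _; rewrite !mxE.
by move/(row_free_inj free)/rowP/(_ j); rewrite !mxE.
Qed.

(* Polarizing at xi0, where the r_j xi0 vanish, isolates the coefficients r_j v. *)
Lemma row_free_quadratic_eq0 (A : 'I_p -> 'M[F]_(m, d)) (r : 'I_p -> 'rV[F]_d)
    (xi0 : 'cV[F]_d) :
  row_free (\matrix_(j < p, k < m) (A j *m xi0) k 0) ->
  (forall xi : 'cV[F]_d, \sum_j (r j *m xi) 0 0 *: (A j *m xi) = 0) ->
  forall j, r j = 0.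
Proof.
move=> free quad0.
have r_xi0 j : (r j *m xi0) 0 0 = 0 by exact: row_free_lincomb_eq0 (quad0 xi0) j.
have r_v (v : 'cV[F]_d) j : (r j *m v) 0 0 = 0.
  apply: (row_free_lincomb_eq0 (c := fun j => (r j *m v) 0 0) free _ j).
  set S := \sum_j _.
  have : S + S = \sum_j (r j *m (xi0 + v)) 0 0 *: (A j *m (xi0 + v))
                 - \sum_j (r j *m (xi0 - v)) 0 0 *: (A j *m (xi0 - v)).
    rewrite -sumrB /S -big_split; apply: eq_bigr => l _ /=.
    rewrite !mulmxDr !mulmxN [(r l *m xi0 + _) 0 0]mxE [(r l *m xi0 - _) 0 0]mxE.
    rewrite r_xi0 !add0r.
    by apply/matrixP => a b; rewrite !mxE; ring.
  rewrite !quad0 subrr -mulr2n -scaler_nat => /eqP.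
  by rewrite scaler_eq0 pnatr_eq0 => /eqP.
move=> j; apply/rowP => k; rewrite mxE.
by have := r_v (delta_mx k 0) j; rewrite -colE mxE.
Qed.

End QuadraticVanishing.

Section MatrixCalculus.
Context {R : realType} {V : normedModType R}.

Lemma differentiable_mx_entry p q (F : V -> 'M[R]_(p, q)) x i j :
  differentiable F x -> differentiable (fun y => F y i j) x.
Proof. by move=> dF; exact: differentiable_comp dF (differentiable_coord _ i j). Qed.

Lemma differentiable_mx p q (F : V -> 'M[R]_(p, q)) x :
  (forall i j, differentiable (fun y => F y i j) x) -> differentiable F x.
Proof.
move=> dF; have -> : F = \sum_i \sum_j (fun y => F y i j *: delta_mx i j).
  apply/funext => y; rewrite [LHS]matrix_sum_delta fct_sumE.
  by apply: eq_bigr => i _; rewrite fct_sumE.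
apply: differentiable_sum => i; apply: differentiable_sum => j.
exact: differentiableZl.
Qed.

Lemma differentiable_fun_sum (W : normedModType R) m (F : 'I_m -> V -> W) x :
  (forall s, differentiable (F s) x) ->
  differentiable (fun y => \sum_s F s y) x.
Proof. by move=> dF; rewrite -fct_sumE; exact: differentiable_sum. Qed.

Lemma derive_fun_sum (W : normedModType R) m (F : 'I_m -> V -> W) x v :
  (forall s, differentiable (F s) x) ->
  'D_v (fun y => \sum_s F s y) x = \sum_s 'D_v (F s) x.
Proof.
by move=> dF; rewrite -fct_sumE derive_sum // => s; exact: diff_derivable.
Qed.

Lemma derive_lincomb (W : normedModType R) m (F : V -> W) x
    (c : 'I_m -> R) (w : 'I_m -> V) :
  differentiable F x ->
  'D_(\sum_s c s *: w s) F x = \sum_s c s *: 'D_(w s) F x.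
Proof.
move=> dF; rewrite deriveE // linear_sum; apply: eq_bigr => s _.
by rewrite linearZ deriveE.
Qed.

Section Products.
Variables (p q s : nat) (x v : V).

Let mulmx_entry_sum (F : V -> 'M[R]_(p, q)) (G : V -> 'M[R]_(q, s)) i j :
  (fun y => (F y *m G y) i j) = \sum_m ((fun y => F y i m) * (fun y => G y m j)).
Proof. by apply/funext => y; rewrite mxE fct_sumE. Qed.

Lemma differentiable_mulmx (F : V -> 'M[R]_(p, q)) (G : V -> 'M[R]_(q, s)) :
  differentiable F x -> differentiable G x ->
  differentiable (fun y => F y *m G y) x.
Proof.
move=> dF dG; apply: differentiable_mx => i j; rewrite mulmx_entry_sum.
apply: differentiable_sum => m.
by apply: differentiableM; exact: differentiable_mx_entry.
Qed.

Lemma derive_mulmx (F : V -> 'M[R]_(p, q)) (G : V -> 'M[R]_(q, s)) :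
  differentiable F x -> differentiable G x ->
  'D_v (fun y => F y *m G y) x = 'D_v F x *m G x + F x *m 'D_v G x.
Proof.
move=> dF dG; rewrite !derive_mx; do ?exact/diff_derivable/differentiable_mulmx.
  2, 3: exact: diff_derivable.
apply/matrixP => i j; rewrite !mxE mulmx_entry_sum derive_sum; last first.
  move=> m; apply/diff_derivable/differentiableM; exact: differentiable_mx_entry.
rewrite -big_split /=; apply: eq_bigr => m _.
rewrite deriveM ?mxE; do ?exact/diff_derivable/differentiable_mx_entry.
by rewrite addrC; congr (_ + _); exact: mulrC.
Qed.

Lemma differentiable_scalemx (h : V -> R) (F : V -> 'M[R]_(p, q)) :
  differentiable h x -> differentiable F x ->
  differentiable (fun y => h y *: F y) x.
Proof.
move=> dh dF; apply: differentiable_mx => i j.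
have -> : (fun y => (h y *: F y) i j) = h * (fun y => F y i j).
  by apply/funext => y; rewrite mxE.
by apply: differentiableM => //; exact: differentiable_mx_entry.
Qed.

Lemma derive_scalemx (h : V -> R) (F : V -> 'M[R]_(p, q)) :
  differentiable h x -> differentiable F x ->
  'D_v (fun y => h y *: F y) x = 'D_v h x *: F x + h x *: 'D_v F x.
Proof.
move=> dh dF; rewrite !derive_mx; do ?exact/diff_derivable/differentiable_scalemx.
  2: exact: diff_derivable.
apply/matrixP => i j; rewrite !mxE.
have -> : (fun y => (h y *: F y) i j) = h * (fun y => F y i j).
  by apply/funext => y; rewrite mxE.
rewrite deriveM; do ?exact/diff_derivable/differentiable_mx_entry.
  2: exact: diff_derivable.
by rewrite addrC; congr (_ + _); exact: mulrC.
Qed.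

End Products.

End MatrixCalculus.

Section ContinuousPartials.
Context {R : realType} {n : nat}.
Local Notation pt := 'cV[R]_n.

Let line_quotientE (f : pt -> R) (p e : pt) (t : R) :
  (fun s : R => s^-1 *: (((fun u : R => f (p + u *: e)) \o shift t) (s *: 1)
                         - f (p + t *: e)))
  = (fun s : R => s^-1 *: ((f \o shift (p + t *: e)) (s *: e) - f (p + t *: e))).
Proof.
apply/funext => s /=; congr (_ *: (f _ - _)).
by rewrite [s *: 1]/GRing.scale /= mulr1 scalerDl addrCA addrC.
Qed.

Lemma derivable_line (f : pt -> R) (p e : pt) (t : R) :
  derivable f (p + t *: e) e -> derivable (fun u : R => f (p + u *: e)) t 1.
Proof. by rewrite /derivable line_quotientE. Qed.

Lemma derive_line (f : pt -> R) (p e : pt) (t : R) :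
  'D_1 (fun u : R => f (p + u *: e)) t = 'D_e f (p + t *: e).
Proof. by rewrite /derive line_quotientE. Qed.

Definition stair (h : pt) (m : nat) : pt :=
  \col_i (if (i < m)%N then h i 0 else 0).

Lemma stair0 (h : pt) : stair h 0 = 0.
Proof. by apply/matrixP => i j; rewrite !mxE. Qed.

Lemma stair_full (h : pt) : stair h n = h.
Proof. by apply/matrixP => i j; rewrite !mxE ltn_ord (ord1 j). Qed.

Lemma stairS (h : pt) (k : 'I_n) : stair h k.+1 = stair h k + h k 0 *: e_ R k.
Proof.
apply/matrixP => i j; rewrite !mxE (ord1 j) eqxx andbT ltnS.
case: (ltngtP i k) => [ik|ki|/val_inj ->].
- by rewrite (ltn_eqF ik : (i == k) = false) mulr0 addr0.
- by rewrite (gtn_eqF ki : (i == k) = false) mulr0 addr0.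
- by rewrite eqxx mulr1 add0r.
Qed.

Lemma norm_stair_step (h : pt) (k : 'I_n) (c : R) :
  `|c| <= `|h k 0| -> `|stair h k + c *: e_ R k| <= `|h|.
Proof.
move=> ck; apply: mx_norm_le => // i j.
rewrite (ord1 j) !mxE eqxx andbT.
case: (ltngtP i k) => [ik|ki|/val_inj ->].
- by rewrite (ltn_eqF ik : (i == k) = false) mulr0 addr0 ler_mx_entry_norm.
- by rewrite (gtn_eqF ki : (i == k) = false) mulr0 addr0 normr0.
- by rewrite eqxx mulr1 add0r (le_trans ck) ?ler_mx_entry_norm.
Qed.

(* One mean value theorem per coordinate, along the path
   x, x + stair h 1, ..., x + stair h n = x + h. *)
Lemma increment_partials (f : pt -> R) (x : pt) (r : R) :
  (forall y, `|y - x| < r -> forall k, derivable f y (e_ R k)) ->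
  forall h : pt, `|h| < r -> exists q : 'I_n -> pt,
    (forall k, `|q k - x| <= `|h|) /\
    f (x + h) - f x = \sum_(k < n) h k 0 * 'D_(e_ R k) f (q k).
Proof.
move=> df h hr.
have shiftK (y z : pt) : x + y + z - x = y + z by rewrite addrC !addrA addNr add0r.
have step (k : 'I_n) : exists c : R, `|c| <= `|h k 0| /\
    f (x + stair h k.+1) - f (x + stair h k)
    = h k 0 * 'D_(e_ R k) f (x + stair h k + c *: e_ R k).
  have [|c [ck E]] :=
    @MVT_at0 _ (fun u : R => f (x + stair h k + u *: e_ R k)) (h k 0).
    move=> t tk; apply/derivable_line/df.
    by rewrite shiftK (le_lt_trans (norm_stair_step tk)).
  exists c; split => //; rewrite scale0r addr0 in E.
  by rewrite stairS addrA E derive_line mulrC.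
have [c Hc] := fin_all_exists step.
exists (fun k : 'I_n => x + stair h k + c k *: e_ R k); split.
  by move=> k; rewrite shiftK norm_stair_step //; case: (Hc k).
rewrite -{1}(stair_full h) -{2}(addr0 x) -(stair0 h).
rewrite -(telescope_sumr (fun m => f (x + stair h m)) (leq0n n)) big_mkord.
by apply: eq_bigr => k _; case: (Hc k).
Qed.

Lemma increment_partials_littleo (f : pt -> R) (x : pt) (r : R) : 0 < r ->
  (forall y, `|y - x| < r -> forall k, derivable f y (e_ R k)) ->
  (forall k, {for x, continuous (fun y => 'D_(e_ R k) f y)}) ->
  forall eps : R, 0 < eps -> \forall h \near (0 : pt),
    `|f (x + h) - f x - \sum_(k < n) h k 0 * 'D_(e_ R k) f x| <= eps * `|h|.
Proof.
move=> r0 df cdf eps eps0.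
pose e1 := eps / (n%:R + 1).
have e10 : 0 < e1 by rewrite divr_gt0 // ltr_pwDr.
have ne1 : n%:R * e1 <= eps.
  by rewrite mulrA ler_pdivrMr ?ltr_pwDr // mulrDr mulr1 mulrC lerDl ltW.
have : \forall y \near x, forall k, `|'D_(e_ R k) f x - 'D_(e_ R k) f y| < e1.
  apply: (@filter_forall pt 'I_n
    (fun k y => `|'D_(e_ R k) f x - 'D_(e_ R k) f y| < e1) (nbhs x) _) => k.
  exact: (cvgrPdist_lt _ _).1 (cdf k) e1 e10.
case/nbhs_ballP => d d0 dB; apply/nbhs_ballP; exists (Num.min d r).
  by rewrite /= lt_min d0 r0.
move=> h; rewrite -ball_normE /= sub0r normrN lt_min => /andP[hd hr].
have [q [qh ->]] := increment_partials df hr.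
rewrite -sumrB (le_trans (ler_norm_sum _ _ _)) //.
apply: (@le_trans _ _ (\sum_(k < n) `|h| * e1)).
  apply: ler_sum => k _; rewrite -mulrBr normrM ler_pM ?ler_mx_entry_norm //.
  have qd : ball x d (q k).
    by rewrite -ball_normE /= distrC (le_lt_trans (qh k)).
  by have := dB _ qd k; rewrite distrC => /ltW.
by rewrite sumr_const card_ord -mulr_natl mulrCA mulrC ler_wpM2r.
Qed.

Lemma differentiable_partials (f : pt -> R) (x : pt) (r : R) : 0 < r ->
  (forall y, `|y - x| < r -> forall k, derivable f y (e_ R k)) ->
  (forall k, {for x, continuous (fun y => 'D_(e_ R k) f y)}) ->
  differentiable f x.
Proof.
move=> r0 df cdf.
pose dfx (h : pt) := \sum_(k < n) h k 0 * 'D_(e_ R k) f x.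
have dfx_lin : linear dfx.
  move=> c u v; rewrite /dfx scaler_sumr -big_split /=; apply: eq_bigr => k _.
  by rewrite !mxE /GRing.scale /= mulrDl mulrA.
pose dfL : {linear pt -> R} :=
  HB.pack dfx (GRing.isLinear.Build _ _ _ _ dfx dfx_lin).
have dfL_cont : continuous dfL.
  have -> : (dfL : pt -> R) = \sum_(k < n) (fun h : pt => h k 0 *: 'D_(e_ R k) f x).
    by apply/funext => h; rewrite fct_sumE.
  move=> y; apply/differentiable_continuous/differentiable_sum => k.
  exact/differentiableZl/differentiable_coord.
have fE : f \o shift x = cst (f x) + dfL +o_ (0 : pt) id.
  apply/eqaddoP => eps eps0.
  near=> h; rewrite !fctE /= (addrC h x) opprD addrA.
  by near: h; exact: increment_partials_littleo r0 df cdf _ eps0.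
by apply/diff_locallyP; rewrite (diff_unique dfL_cont fE).
Unshelve. all: by end_near.
Qed.

End ContinuousPartials.

Section Smooth.
Context {R : realType} {n : nat}.
Local Notation pt := 'cV[R]_n.
Implicit Types (U : set pt) (f : pt -> R).

Lemma smooth_on_differentiable U f x :
  open U -> smooth_on U f -> U x -> differentiable f x.
Proof.
move=> oU sf Ux; have /nbhs_ballP[r r0 rU] : nbhs x U by exact: open_nbhs_nbhs.
apply: (differentiable_partials r0) => [y yr k|k]; last exact: (sf [:: k] x Ux).1.
by apply: (sf [::] y _).2; apply: rU; rewrite -ball_normE /= distrC.
Qed.

Lemma smooth_op_differentiable U (L : pt -> 'M[R]_n) x :
  open U -> smooth_op U L -> U x -> differentiable L x.
Proof.
move=> oU sL Ux; apply: differentiable_mx => k l.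
exact: smooth_on_differentiable oU (sL k l) Ux.
Qed.

Lemma smooth_vf_differentiable U (X : pt -> pt) x :
  open U -> smooth_vf U X -> U x -> differentiable X x.
Proof.
move=> oU sX Ux; apply: differentiable_mx => k l; rewrite (ord1 l).
exact: smooth_on_differentiable oU (sX k) Ux.
Qed.

Lemma smooth_on_cst U (c : R) : smooth_on U (fun _ => c).
Proof.
move=> s y _; have [d ->] : exists d : R, iter_partial s (fun _ => c) = fun _ => d.
  elim: s => [|i s [d IH]]; first by exists c.
  by exists 0; rewrite /= IH; apply/funext => z; exact: derive_cst.
by split=> [|i]; [exact: cst_continuous | exact: derivable_cst].
Qed.

Lemma smooth_vf_cst U (xi : pt) : smooth_vf U (fun _ => xi).
Proof. by move=> k; exact: smooth_on_cst. Qed.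

Lemma derive_dform f x v : differentiable f x -> 'D_v f x = (dform f x *m v) 0 0.
Proof.
move=> df; have vE : v = \sum_k v k 0 *: e_ R k.
  by rewrite [LHS]matrix_sum_delta; apply: eq_bigr => k _; rewrite big_ord1.
rewrite [in LHS]vE derive_lincomb // mxE; apply: eq_bigr => k _.
by rewrite /dform mxE mulrC.
Qed.

End Smooth.

Section Angle.
Context {R : realType} {n : nat}.
Local Notation pt := 'cV[R]_n.
Local Notation opf := (pt -> 'M[R]_n).

Definition angle_pt (L M : opf) (x xi : pt) : pt :=
  'D_(L x *m xi) M x *m xi - 'D_(M x *m xi) L x *m xi
  - L x *m ('D_xi M x *m xi) + M x *m ('D_xi L x *m xi).

Let angle_diag_rearrange (A B C D E G Z : pt) :
  A + B - (C + D) - (E + Z - D) - (B - (G + Z)) = A - C - E + G.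
Proof. by apply/matrixP => i j; rewrite !mxE; ring. Qed.

Lemma angle_diagE (L M : opf) (X : pt -> pt) x :
  differentiable L x -> differentiable M x -> differentiable X x ->
  L x *m M x = M x *m L x -> angle L M X X x = angle_pt L M x (X x).
Proof.
move=> dL dM dX LM.
rewrite /angle /lie /app subrr mulmx0 add0r !derive_mulmx //.
rewrite !mulmxDr !mulmxN !mulmxDr !mulmxA -LM /angle_pt !mulmxA.
exact: angle_diag_rearrange.
Qed.

Lemma angle_pt_id (L : opf) x xi : angle_pt L L x xi = 0.
Proof. by rewrite /angle_pt subrr sub0r addNr. Qed.

Lemma symmetries_on_angle_pt U (L M : opf) x xi :
  differentiable L x -> differentiable M x -> symmetries_on U L M -> U x ->
  angle_pt L M x xi = 0.
Proof.
move=> dL dM [LM sym] Ux.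
rewrite -(angle_diagE (X := fun _ => xi)) ?LM //.
exact: sym _ (smooth_vf_cst xi) x Ux.
Qed.

Let angle_pt_lincomb_rearrange (a b c d e f : pt) :
  a - (b + c) - d + (e + f) = a - c - d + f + (e - b).
Proof. by apply/matrixP => i j; rewrite !mxE; ring. Qed.

Lemma angle_pt_lincomb m (K : 'I_m -> opf) (h : 'I_m -> pt -> R) (M : opf) x xi :
  (forall s, differentiable (K s) x) -> (forall s, differentiable (h s) x) ->
  differentiable M x ->
  angle_pt (fun y => \sum_s h s y *: K s y) M x xi =
  \sum_s (h s x *: angle_pt (K s) M x xi +
     ('D_xi (h s) x *: (M x *m K s x *m xi)
      - 'D_(M x *m xi) (h s) x *: (K s x *m xi))).
Proof.
move=> dK dh dM; set L := fun y => \sum_s h s y *: K s y.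
have LxE (z : pt) : L x *m z = \sum_s h s x *: (K s x *m z).
  by rewrite mulmx_suml; apply: eq_bigr => s _; rewrite scalemxAl.
have DMxE :
    'D_(L x *m xi) M x *m xi = \sum_s h s x *: ('D_(K s x *m xi) M x *m xi).
  rewrite LxE derive_lincomb // mulmx_suml.
  by apply: eq_bigr => s _; rewrite scalemxAl.
have DLxE v : 'D_v L x *m xi
    = \sum_s ('D_v (h s) x *: (K s x *m xi) + h s x *: ('D_v (K s) x *m xi)).
  rewrite derive_fun_sum => [|s]; last exact: differentiable_scalemx.
  rewrite mulmx_suml; apply: eq_bigr => s _.
  by rewrite derive_scalemx // mulmxDl -!scalemxAl.
rewrite /angle_pt DMxE (DLxE xi) (DLxE (M x *m xi)) LxE.
rewrite mulmx_sumr -!sumrB -big_split /=; apply: eq_bigr => s _.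
rewrite mulmxDr -!scalemxAr !mulmxA scalerDr !scalerBr.
exact: angle_pt_lincomb_rearrange.
Qed.

End Angle.

Section CombinationSymmetry.
Context {R : realType} {n : nat}.
Local Notation pt := 'cV[R]_n.
Variables (K : 'I_n -> pt -> 'M[R]_n) (a : 'I_n -> 'I_n -> 'I_n -> pt -> R)
  (h : 'I_n -> pt -> R).

Definition structure_defect i j x : 'rV[R]_n :=
  \sum_s a i s j x *: dform (h s) x - dform (h j) x *m K i x.

Variables (i : 'I_n) (x xi : pt).
Hypotheses (dK : forall s, differentiable (K s) x)
  (dh : forall s, differentiable (h s) x)
  (mulK : forall s, K i x *m K s x = \sum_j a i s j x *: K j x).

Lemma dh_terms_structure_defect :
  \sum_s ('D_xi (h s) x *: (K i x *m K s x *m xi)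
          - 'D_(K i x *m xi) (h s) x *: (K s x *m xi))
  = \sum_j (structure_defect i j x *m xi) 0 0 *: (K j x *m xi).
Proof.
have defectE j : (structure_defect i j x *m xi) 0 0
    = \sum_s a i s j x * (dform (h s) x *m xi) 0 0
      - (dform (h j) x *m (K i x *m xi)) 0 0.
  rewrite mulmxBl mulmx_suml -mulmxA !mxE summxE.
  by congr (_ - _); apply: eq_bigr => s _; rewrite -scalemxAl mxE.
under [RHS]eq_bigr => j _ do rewrite defectE scalerBl.
rewrite !sumrB; congr (_ - _); last by apply: eq_bigr => s _; rewrite derive_dform.
under eq_bigr => s _ do rewrite mulK mulmx_suml scaler_sumr.
rewrite exchange_big /=; apply: eq_bigr => j _.
rewrite scaler_suml; apply: eq_bigr => s _.
by rewrite -scalemxAl scalerA derive_dform // mulrC.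
Qed.

Lemma angle_pt_combination :
  (forall s, s != i -> angle_pt (K s) (K i) x xi = 0) ->
  angle_pt (fun y => \sum_s h s y *: K s y) (K i) x xi
  = \sum_j (structure_defect i j x *m xi) 0 0 *: (K j x *m xi).
Proof.
move=> symK; rewrite angle_pt_lincomb // big_split /= big1 ?add0r.
  exact: dh_terms_structure_defect.
move=> s _; have [->|si] := eqVneq s i; first by rewrite angle_pt_id scaler0.
by rewrite symK // scaler0.
Qed.

End CombinationSymmetry.

(* a i j s = a_{ij}^s, i.e. K_i K_j = sum_s a_{ij}^s K_s.
   The conclusion K_i^* dh^j = sum_s a^j_{is} dh^s reads
   (dh^j) K_i = sum_s (a i s j) (dh^s) with 1-forms as row vectors. *)
Theorem mainTheorem4 (R : realType) (n : nat) (U : set 'cV[R]_n)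
    (K : 'I_n -> 'cV[R]_n -> 'M[R]_n) (a : 'I_n -> 'I_n -> 'I_n -> 'cV[R]_n -> R) :
  open U ->
  op_frobenius_algebra U K ->
  (forall i j x, U x -> K i x *m K j x = \sum_(s < n) a i j s x *: K s x) ->
  (forall i j : 'I_n, i != j -> symmetries_on U (K i) (K j)) ->
  forall h : 'I_n -> 'cV[R]_n -> R,
  (forall s, smooth_on U (h s)) ->
  (common_symmetry U (fun x => \sum_(s < n) h s x *: K s x) K <->
   (forall (i j : 'I_n) x, U x ->
      dform (h j) x *m K i x = \sum_(s < n) a i s j x *: dform (h s) x)).
Proof.
move=> oU [smK commK indep _] mulK symK h smh.
set L := fun x => \sum_s h s x *: K s x.
have dK s x : U x -> differentiable (K s) x by exact: smooth_op_differentiable.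
have dh s x : U x -> differentiable (h s) x by exact: smooth_on_differentiable.
have dL x : U x -> differentiable L x.
  move=> Ux; apply: differentiable_fun_sum => s.
  by apply: differentiable_scalemx; [exact: dh | exact: dK].
have commL i x : U x -> L x *m K i x = K i x *m L x.
  move=> Ux; rewrite mulmx_suml mulmx_sumr; apply: eq_bigr => s _.
  by rewrite -scalemxAl -scalemxAr commK.
have angleLE i x xi : U x -> angle_pt L (K i) x xi
    = \sum_j (structure_defect K a h i j x *m xi) 0 0 *: (K j x *m xi).
  move=> Ux; apply: angle_pt_combination => [s|s|s|s si]; auto.
  exact: symmetries_on_angle_pt (dK _ _ Ux) (dK _ _ Ux) (symK s i si) Ux.
split=> [symL i j x Ux | defect0 i].
- have [xi0 free] := indep x Ux.
  suff /(_ j)/eqP : forall j, structure_defect K a h i j x = 0.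
    by rewrite subr_eq0 eq_sym => /eqP.
  apply: (row_free_quadratic_eq0 free) => xi; rewrite -angleLE //.
  exact: symmetries_on_angle_pt (dL x Ux) (dK i x Ux) (symL i) Ux.
- split=> [x Ux | X smX x Ux]; first exact: commL.
  have dX := smooth_vf_differentiable oU smX Ux.
  rewrite (angle_diagE (dL x Ux) (dK i x Ux) dX (commL i x Ux)) angleLE //.
  rewrite big1 // => j _.
  by rewrite /structure_defect defect0 // subrr mul0mx mxE scale0r.
Qed.
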